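(* Let $X$ be a compact Hausdorff space and $\varphi:X\to X$ a continuous surjection. Then the canonical homeomorphism extension $(\tilde X,\tilde\varphi)$ of $(X,\varphi)$ is minimal.
   Context: A system $(Y,\psi)$ ($Y$ compact Hausdorff, $\psi$ a continuous surjection) is an extension of $(X,\varphi)$ if there is a continuous surjection $p:Y\to X$ (the extension map) with $p\circ\psi=\varphi\circ p$; if $p$ is a homeomorphism it is a conjugacy, and the systems are conjugate. A homeomorphism extension is an extension in which $\psi$ is a homeomorphism. The canonical homeomorphism extension: $\tilde X=\{(x_1,x_2,\dots)\in\prod_{n\ge1}X : x_n=\varphi(x_{n+1})\ \forall n\}$ with product topology, $\tilde\varphi(x_1,x_2,\dots)=(\varphi(x_1),x_1,x_2,\dots)$, extension map $p(x_1,x_2,\dots)=x_1$. A homeomorphism extension $(Y,\psi)$ of $(X,\varphi)$ is minimal if whenever $(Z,\sigma)$ is a homeomorphism extension of $(X,\varphi)$ and $(Y,\psi)$ is an extension of $(Z,\sigma)$ such that the composition of the extension map of $Z$ over $X$ with the extension map of $Y$ over $Z$ equals the extension map of $Y$ over $X$, then $(Y,\psi)$ and $(Z,\sigma)$ are conjugate. *)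

From HB Require Import structures.
From mathcomp Require Import all_boot all_order all_algebra.
From mathcomp Require Import all_classical all_reals all_analysis.
Set Implicit Arguments. Unset Strict Implicit. Unset Printing Implicit Defensive.
Local Open Scope classical_set_scope.

Definition onto_map {A B : Type} (f : A -> B) := forall b, exists a, f a = b.

Definition homeomorphism {Y Z : topologicalType} (f : Y -> Z) :=
  continuous f /\ exists g : Z -> Y, continuous g /\ cancel f g /\ cancel g f.

Definition system (Y : topologicalType) (psi : Y -> Y) :=
  compact [set: Y] /\ hausdorff_space Y /\ continuous psi /\ onto_map psi.

Definition is_extension {Y X : topologicalType} (psi : Y -> Y) (phi : X -> X)
  (p : Y -> X) := continuous p /\ onto_map p /\ (forall y, p (psi y) = phi (p y)).

Definition conjugate {Y Z : topologicalType} (psi : Y -> Y) (sigma : Z -> Z) :=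
  exists h : Y -> Z, is_extension psi sigma h /\ homeomorphism h.

Definition homeo_extension {X Y : topologicalType} (phi : X -> X)
  (psi : Y -> Y) (p : Y -> X) :=
  system psi /\ homeomorphism psi /\ is_extension psi phi p.

Definition minimal_homeo_extension {X Y : topologicalType} (phi : X -> X)
  (psi : Y -> Y) (p : Y -> X) :=
  homeo_extension phi psi p /\
  forall (Z : topologicalType) (sigma : Z -> Z) (q : Z -> X) (r : Y -> Z),
    homeo_extension phi sigma q -> is_extension psi sigma r ->
    (forall y, q (r y) = p y) -> conjugate psi sigma.

(* Canonical homeomorphism extension. Sequences are indexed from 0:
   x : nat -> X stands for (x_1, x_2, ...) with x_{n+1} = x n. *)
Definition tildeX_set {X : topologicalType} (phi : X -> X) : set {ptws nat -> X} :=
  [set x | forall n, x n = phi (x n.+1)].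

Definition tildeX {X : topologicalType} (phi : X -> X) : topologicalType :=
  (set_type (tildeX_set phi) : topologicalType).

Definition shift_fun {X : topologicalType} (phi : X -> X) (x : {ptws nat -> X}) : {ptws nat -> X} :=
  fun n => if n is m.+1 then x m else phi (x 0%N).

Lemma shift_fun_in {X : topologicalType} (phi : X -> X) (x : tildeX phi) :
  tildeX_set phi (shift_fun phi (set_val x)).
Proof.
case: x => x /= /set_mem Hx [|n] //=.
Qed.

Definition tphi {X : topologicalType} (phi : X -> X) : tildeX phi -> tildeX phi :=
  fun x => exist _ (shift_fun phi (set_val x)) (mem_set (shift_fun_in x)).

Definition tproj {X : topologicalType} (phi : X -> X) : tildeX phi -> X :=
  fun x => set_val x 0%N.

Arguments tphi {X} phi _.
Arguments tproj {X} phi _.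

From mathcomp Require Import all_boot all_order all_algebra.
From mathcomp Require Import all_classical all_reals all_analysis.
Set Implicit Arguments. Unset Strict Implicit. Unset Printing Implicit Defensive.
Local Open Scope classical_set_scope.

(** A point of the inverse limit [tildeX phi] is a backward orbit
    [(x_0, x_1, ...)] with [x_n = phi x_(n+1)]; [tphi] shifts it forward and
    is inverted by dropping the first coordinate.  Tychonoff makes the inverse
    limit compact.  For minimality, let [r] factor [tproj] through a
    homeomorphism extension [(Z, sigma)] over [q].  Since [r] intertwines the
    inverses of [tphi] and [sigma], the [n]-th coordinate of [y] is
    [q (sigma^-n (r y))]; this formula is a continuous left inverse of [r], so
    the continuous surjection [r] is a conjugacy. *)

Lemma continuous_ptws (I : Type) (T X : topologicalType) (f : T -> {ptws I -> X}) :
  (forall i, continuous (f ^~ i)) -> continuous f.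
Proof.
move=> cf x; apply/cvg_sup => i; move: x.
apply/(@continuousP _ (initial_topology (@^~ i))) => A [B oB <-].
exact: (@open_comp _ _ (f ^~ i)).
Qed.

Lemma closed_eq_fun (T Y : topologicalType) (f g : T -> Y) :
  hausdorff_space Y -> continuous f -> continuous g -> closed [set x | f x = g x].
Proof.
move=> hY cf cg x clx; apply: hY => A B nA nB.
have nAB : nbhs x (f @^-1` A `&` g @^-1` B) by apply: filterI; [exact: cf|exact: cg].
have [y [/= fgy [Ay By]]] := clx _ nAB.
by exists (f y); split => //; rewrite fgy.
Qed.

Lemma continuous_iter (Z : topologicalType) (s : Z -> Z) n :
  continuous s -> continuous (iter n s).
Proof.
move=> cs; elim: n => [|n IH] /=; first by move=> ?; exact: cvg_id.
by move=> z; apply: (@continuous_comp _ _ _ (iter n s) s); [exact: IH|exact: cs].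
Qed.

Lemma homeomorphism_cancel (Y Z : topologicalType) (f : Y -> Z) (g : Z -> Y) :
  continuous f -> onto_map f -> continuous g -> cancel f g -> homeomorphism f.
Proof.
move=> cf f_onto cg fK; split => //; exists g; split => //; split => // z.
by have [y <-] := f_onto z; rewrite fK.
Qed.

Section CanonicalExtension.
Variables (X : topologicalType) (phi : X -> X).

Lemma continuous_tildeX_val : continuous (set_val : tildeX phi -> {ptws nat -> X}).
Proof. exact: initial_continuous. Qed.

Lemma continuous_tildeX_coord n : continuous (fun x : tildeX phi => set_val x n).
Proof.
move=> x; apply: (@continuous_comp _ _ _ set_val (fun f : {ptws nat -> X} => f n)).
  exact: continuous_tildeX_val.
exact: (@proj_continuous nat (fun _ => X) n).
Qed.

Lemma continuous_into_tildeX (T : topologicalType) (g : T -> tildeX phi) :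
  (forall n, continuous (fun t => set_val (g t) n)) -> continuous g.
Proof.
by move=> cg; apply: (@continuous_comp_initial _ _ _ set_val); apply: continuous_ptws.
Qed.

Lemma tildeX_hausdorff : hausdorff_space X -> hausdorff_space (tildeX phi).
Proof.
move=> hX p q clpq; apply: val_inj; apply: hausdorff_product => // A B nA nB.
have [z [Az Bz]] := clpq _ _ (continuous_tildeX_val nA) (continuous_tildeX_val nB).
by exists (set_val z).
Qed.

Hypotheses (cX : compact [set: X]) (hX : hausdorff_space X) (cphi : continuous phi).

Lemma compact_tildeX_set : compact (tildeX_set phi).
Proof.
have pc n : continuous (fun f : {ptws nat -> X} => f n)
  by exact: (@proj_continuous nat (fun _ => X) n).
have -> : tildeX_set phi =
    \bigcap_(n in [set: nat]) [set f : {ptws nat -> X} | f n = phi (f n.+1)].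
  by apply/seteqP; split => [f Hf n _|f Hf n] //=; exact: Hf.
apply: (@subclosed_compact _ _ [set f : {ptws nat -> X} | forall i, [set: X] (f i)]).
- apply: closed_bigI => n _; apply: closed_eq_fun => // f.
  by apply: continuous_comp; [exact: pc|exact: cphi].
- exact: (@tychonoff nat (fun _ => X) (fun _ => [set: X])).
- by [].
Qed.

Lemma compact_tildeX : compact [set: tildeX phi].
Proof.
have [[a0 _]|empty] := pselect (exists a : tildeX phi, True); last first.
  suff -> : [set: tildeX phi] = set0 by exact: compact0.
  by apply/seteqP; split => // a _; apply: empty; exists a.
pose F (f : {ptws nat -> X}) : tildeX phi :=
  if pselect (tildeX_set phi f) is left h then exist _ f (mem_set h) else a0.
have FE (y : tildeX phi) : F (set_val y) = y.
  rewrite /F; case: pselect => [h|h]; first exact: val_inj.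
  by exfalso; apply: h; exact: set_valP.
have -> : [set: tildeX phi] = F @` tildeX_set phi.
  by apply/seteqP; split => // y _; exists (set_val y); [exact: set_valP|exact: FE].
apply: continuous_compact compact_tildeX_set.
apply/subspace_sigL_continuousP.
have -> : sigL (tildeX_set phi) F = id by apply: funext => y; exact: FE.
by move=> ?; exact: cvg_id.
Qed.

End CanonicalExtension.

Section ShiftInverse.
Variables (X : topologicalType) (phi : X -> X).

Lemma tildeX_set_tail (x : tildeX phi) : tildeX_set phi (fun n => set_val x n.+1).
Proof. by move=> n; have := set_valP x; apply. Qed.

Definition tphi_inv (x : tildeX phi) : tildeX phi :=
  exist _ (fun n => set_val x n.+1) (mem_set (tildeX_set_tail x)).

Lemma tphiK : cancel (tphi phi) tphi_inv.
Proof. by move=> x; apply: val_inj; apply: funext. Qed.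

Lemma tphi_invK : cancel tphi_inv (tphi phi).
Proof.
move=> x; apply: val_inj; apply: funext => -[|n] //=.
by rewrite /shift_fun /= -(set_valP x 0%N).
Qed.

Lemma iter_tphi_inv n (y : tildeX phi) m :
  set_val (iter n tphi_inv y) m = set_val y (m + n).
Proof.
elim: n y m => [|n IH] y m; first by rewrite addn0.
by rewrite iterSr IH addnS.
Qed.

Lemma continuous_tphi : continuous phi -> continuous (tphi phi).
Proof.
move=> cphi; apply: continuous_into_tildeX => -[|n] /=; last exact: continuous_tildeX_coord.
move=> x; apply: (@continuous_comp _ _ _ (fun x : tildeX phi => set_val x 0%N) phi).
  exact: continuous_tildeX_coord.
exact: cphi.
Qed.

Lemma continuous_tphi_inv : continuous tphi_inv.
Proof. by apply: continuous_into_tildeX => n; exact: continuous_tildeX_coord. Qed.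

Lemma tproj_onto : onto_map phi -> onto_map (tproj phi).
Proof.
move=> ophi x; have [g gK] := @choice X X (fun y z => phi z = y) ophi.
have orbit_in : tildeX_set phi (fun n => iter n g x) by move=> n /=; rewrite gK.
by exists (exist _ (fun n => iter n g x) (mem_set orbit_in)).
Qed.

Lemma tphi_homeo_extension :
  compact [set: X] -> hausdorff_space X -> continuous phi -> onto_map phi ->
  homeo_extension phi (tphi phi) (tproj phi).
Proof.
move=> cX hX cphi ophi.
have tphi_onto : onto_map (tphi phi) by move=> y; exists (tphi_inv y); exact: tphi_invK.
have ctphi := continuous_tphi cphi.
split; [|split].
- split; first exact: compact_tildeX.
  by split; [exact: tildeX_hausdorff|split].
- exact: homeomorphism_cancel ctphi tphi_onto continuous_tphi_inv tphiK.
- by split; [exact: continuous_tildeX_coord|split; [exact: tproj_onto|]].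
Qed.

Section BackwardOrbit.
Variables (Z : topologicalType) (sigma sigma_inv : Z -> Z) (q : Z -> X).
Hypotheses (sigma_invK : cancel sigma_inv sigma) (q_sigma : forall z, q (sigma z) = phi (q z)).

Lemma tildeX_set_backward_orbit z : tildeX_set phi (fun n => q (iter n sigma_inv z)).
Proof. by move=> n /=; rewrite -q_sigma sigma_invK. Qed.

Definition backward_orbit z : tildeX phi :=
  exist _ (fun n => q (iter n sigma_inv z)) (mem_set (tildeX_set_backward_orbit z)).

Lemma continuous_backward_orbit :
  continuous q -> continuous sigma_inv -> continuous backward_orbit.
Proof.
move=> cq csi; apply: continuous_into_tildeX => n z.
apply: (@continuous_comp _ _ _ (iter n sigma_inv) q); last exact: cq.
exact: continuous_iter.
Qed.

Lemma backward_orbitK (r : tildeX phi -> Z) :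
  cancel sigma sigma_inv -> (forall y, r (tphi phi y) = sigma (r y)) ->
  (forall y, q (r y) = tproj phi y) -> cancel r backward_orbit.
Proof.
move=> sigmaK r_tphi q_r y; apply: val_inj; apply: funext => n /=.
have r_inv y' : r (tphi_inv y') = sigma_inv (r y').
  by rewrite -{2}(tphi_invK y') r_tphi sigmaK.
have -> : iter n sigma_inv (r y) = r (iter n tphi_inv y).
  by elim: n => [|n IH] //=; rewrite IH r_inv.
by rewrite q_r /tproj iter_tphi_inv.
Qed.

End BackwardOrbit.
End ShiftInverse.

Arguments continuous_backward_orbit {X phi Z sigma sigma_inv q} sigma_invK q_sigma.
Arguments backward_orbitK {X phi Z sigma sigma_inv q} sigma_invK q_sigma {r}.

Theorem lemma1 (X : topologicalType) (phi : X -> X) :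
  compact [set: X] -> hausdorff_space X -> continuous phi -> onto_map phi ->
  minimal_homeo_extension phi (tphi phi) (tproj phi).
Proof.
move=> cX hX cphi ophi; split; first exact: tphi_homeo_extension.
move=> Z sigma q r [_ [[_ [sigma_inv [csi [sigmaK sigma_invK]]]] [cq [_ q_sigma]]]].
move=> [cr [r_onto r_tphi]] q_r; exists r; split; first by split.
exact: homeomorphism_cancel cr r_onto
  (continuous_backward_orbit sigma_invK q_sigma cq csi)
  (backward_orbitK sigma_invK q_sigma sigmaK r_tphi q_r).
Qed.
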